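(* Let $\Gamma$ be a metrized graph that is a tree with $v$ vertices. Then $$W(\Gamma)=\frac{2v-1}{4}\,\ell(\Gamma)+ \frac{1}{8} \sum_{p, q \in V(\Gamma)} \mathrm{val}(p)\, \mathrm{val}(q)\, r(p,q).$$ In particular, if each edge length is equal to $1$, $$W(\Gamma)=\frac{(2v-1)(v-1)}{4}+ \frac{1}{8} \sum_{p, q \in V(\Gamma)} \mathrm{val}(p)\,\mathrm{val}(q)\, r(p,q).$$
   Context: A metrized graph is a finite connected graph each of whose edges is identified with a closed segment of positive length; its vertex set $V(\Gamma)$ is a finite nonempty set containing every point of valence $\neq 2$, and $v=\#V(\Gamma)$. $\mathrm{val}(p)$ is the valence of $p$ (number of directions emanating from $p$). $\ell(\Gamma)$ is the total length (sum of edge lengths). $r(p,q)$ is the effective resistance between $p$ and $q$ (edges as resistors with resistance equal to their lengths); on a tree it equals the path distance $d(p,q)$. The Wiener index is $W(\Gamma)=\frac12\sum_{p,q\in V(\Gamma)}d(p,q)$. *)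

From HB Require Import structures.
From mathcomp Require Import all_boot all_order all_algebra.
From mathcomp Require Import classical_sets reals.
Set Implicit Arguments. Unset Strict Implicit. Unset Printing Implicit Defensive.
Import Order.TTheory GRing.Theory Num.Theory.
Local Open Scope ring_scope.
Local Open Scope classical_set_scope.

(* A metrized graph whose vertex set V(Gamma) is the finite type T:
   adjacency  e : rel T  (one edge between adjacent vertices), and the
   length  len p q  of the edge joining p and q. *)

(* A (combinatorial) tree: symmetric, irreflexive, connected, and with
   exactly #|T| - 1 edges (counted here as 2(#|T|-1) ordered pairs). *)
Definition is_tree (T : finType) (e : rel T) : Prop :=
  [/\ symmetric e, irreflexive e,
      (forall p q : T, connect e p q) &
      #|[set x : T * T | e x.1 x.2]| = (#|T| - 1).*2]%N.

Definition edge_lengths (R : realType) (T : finType) (e : rel T)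
  (len : T -> T -> R) : Prop :=
  (forall p q, len p q = len q p) /\ (forall p q, e p q -> 0 < len p q).

Definition valence (T : finType) (e : rel T) (p : T) : nat := #|[set q | e p q]|.

(* total length l(Gamma): each edge counted once *)
Definition total_length (R : realType) (T : finType) (e : rel T)
  (len : T -> T -> R) : R :=
  (\sum_(x : T * T | e x.1 x.2) len x.1 x.2) / 2.

Fixpoint walk_length (R : realType) (T : finType) (len : T -> T -> R)
  (p : T) (s : seq T) : R :=
  if s is q :: s' then len p q + walk_length len q s' else 0.

Definition dist (R : realType) (T : finType) (e : rel T)
  (len : T -> T -> R) (p q : T) : R :=
  inf [set walk_length len p s | s in [set s | path e p s && (last p s == q)]].

Definition wiener (R : realType) (T : finType) (e : rel T)
  (len : T -> T -> R) : R :=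
  (\sum_(p : T) \sum_(q : T) dist e len p q) / 2.

(* Fix a root p and let D := d(p, .).  Every vertex q <> p is entered by a
   "tight" edge r -> q, i.e. one with D q = D r + len r q (the last edge of a
   geodesic), and no edge is tight in both directions.  Since a tree has only
   v - 1 edges, each q <> p has exactly one tight incoming edge and every edge
   is tight in exactly one direction.  Summing D over the endpoints of all
   oriented edges therefore gives
     sum_q val(q) D(q) = 2 sum_q D(q) - l(Gamma).
   Weighting this by val(p), summing over p and using sum_p val(p) = 2(v - 1)
   yields sum_{p,q} val(p) val(q) r(p,q) = 8 W - (4v - 2) l(Gamma). *)

From HB Require Import structures.
From mathcomp Require Import all_boot all_order all_algebra.
From mathcomp Require Import classical_sets reals.
From mathcomp Require Import ring lra.
Set Implicit Arguments. Unset Strict Implicit. Unset Printing Implicit Defensive.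
Import Order.TTheory GRing.Theory Num.Theory.
Local Open Scope ring_scope.

Section Valence.
Variables (R : realType) (T : finType) (e : rel T).

Lemma valenceE p : valence e p = #|[set q | e p q]|.
Proof. by apply: eq_card => q; rewrite unfold_in /= boolp.asboolb inE. Qed.

Lemma card_edge_pairs :
  #|[set x : T * T | e x.1 x.2]%classic| = #|[set x : T * T | e x.1 x.2]|.
Proof. by apply: eq_card => x; rewrite unfold_in /= boolp.asboolb inE. Qed.

Lemma sum_valence_mul (f : T -> R) :
  \sum_q (valence e q)%:R * f q = \sum_(x | e x.1 x.2) f x.1.
Proof.
rewrite -(pair_big_dep xpredT e (fun q _ => f q)) /=.
apply: eq_bigr => q _; rewrite valenceE -sum1dep_card natr_sum mulr_suml.
by apply: eq_bigr => r _; rewrite mul1r.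
Qed.

Lemma sum_valence :
  \sum_q ((valence e q)%:R : R) = #|[set x : T * T | e x.1 x.2]|%:R.
Proof.
rewrite -sum1dep_card natr_sum -(sum_valence_mul (fun=> 1)).
by apply: eq_bigr => q _; rewrite mulr1.
Qed.

End Valence.

Lemma big_pairs_by_snd (V : Type) (idx : V) (op : Monoid.com_law idx)
    (T : finType) (A : {set T * T}) (G : T * T -> V) :
  \big[op/idx]_(x in A) G x = \big[op/idx]_q \big[op/idx]_(r | (r, q) \in A) G (r, q).
Proof.
rewrite (exchange_big_dep xpredT) //= (pair_big_dep xpredT (fun r q => (r, q) \in A)) /=.
by apply: eq_big => -[].
Qed.

Section GeodesicDistance.
Variables (R : realType) (T : finType) (e : rel T) (len : T -> T -> R).
Hypothesis e_sym : symmetric e.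
Hypothesis len_sym : forall p q, len p q = len q p.
Hypothesis len_gt0 : forall p q, e p q -> 0 < len p q.
Hypothesis e_connected : forall p q, connect e p q.

Let walk_lengths p q :=
  [set walk_length len p s | s in [set s | path e p s && (last p s == q)]]%classic.

Lemma walk_length_rcons p s q :
  walk_length len p (rcons s q) = walk_length len p s + len (last p s) q.
Proof.
elim: s p => [|x s IH] p /=; first by rewrite addr0 add0r.
by rewrite IH addrA.
Qed.

Lemma walk_length_ge0 p s : path e p s -> 0 <= walk_length len p s.
Proof.
elim: s p => [|x s IH] p //= /andP[epx ps].
by rewrite addr_ge0 ?IH // ltW // len_gt0.
Qed.

Let walk_lengths_neq0 p q : (walk_lengths p q !=set0)%classic.
Proof.
have /connectP[s ps ->] := e_connected p q.
by exists (walk_length len p s); exists s => //=; rewrite ps eqxx.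
Qed.

Let walk_lengths_ge0 p q : lbound (walk_lengths p q) 0.
Proof. by move=> _ [s /= /andP[ps _] <-]; apply: walk_length_ge0. Qed.

Let has_inf_walk_lengths p q : has_inf (walk_lengths p q).
Proof. by split; [|exists 0]. Qed.

Lemma dist_ge0 p q : 0 <= dist e len p q.
Proof. exact: lb_le_inf (@walk_lengths_neq0 p q) (@walk_lengths_ge0 p q). Qed.

Lemma dist_le_walk p s :
  path e p s -> dist e len p (last p s) <= walk_length len p s.
Proof.
move=> ps; apply: ge_inf; first by case: (has_inf_walk_lengths p (last p s)).
by exists s => //=; rewrite ps eqxx.
Qed.

Lemma distxx p : dist e len p p = 0.
Proof. by apply/eqP; rewrite eq_le dist_ge0 andbT (@dist_le_walk p [::]). Qed.

Lemma dist_le_edge p r q : e r q -> dist e len p q <= dist e len p r + len r q.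
Proof.
move=> erq; rewrite -lerBlDr; apply: lb_le_inf; first exact: walk_lengths_neq0.
move=> _ [s /= /andP[ps /eqP ls] <-].
rewrite lerBlDr -ls -walk_length_rcons -[X in dist _ _ _ X](last_rcons p s q).
by apply: dist_le_walk; rewrite rcons_path ps ls.
Qed.

Lemma walk_rev p s : path e p s -> exists2 t, path e (last p s) t &
  last (last p s) t = p /\ walk_length len (last p s) t = walk_length len p s.
Proof.
elim: s p => [|x s IH] p /=; first by exists [::].
case/andP=> epx /IH[t pt [lt wt]].
exists (rcons t p); first by rewrite rcons_path pt lt e_sym.
by rewrite last_rcons walk_length_rcons lt wt addrC len_sym.
Qed.

Lemma dist_sym p q : dist e len p q = dist e len q p.
Proof.
wlog suff : p q / dist e len p q <= dist e len q p.
  by move=> le_dist; apply/eqP; rewrite eq_le !le_dist.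
apply: lb_le_inf; first exact: walk_lengths_neq0.
move=> _ [s /= /andP[ps /eqP ls] <-].
have [t pt [lt <-]] := walk_rev ps; rewrite ls in pt lt *.
by rewrite -[X in dist _ _ _ X]lt; apply: dist_le_walk.
Qed.

(* If every edge r -> q had positive slack, a walk whose length is within the
   least slack of d(p, q) would end with an edge contradicting that slack. *)
Lemma dist_last_edge p q : q != p ->
  exists r, e r q /\ dist e len p r + len r q <= dist e len p q.
Proof.
move=> qp; apply: boolp.contrapT => /boolp.forallNP no_tight.
pose slack r := dist e len p r + len r q - dist e len p q.
have slack_gt0 r : e r q -> 0 < slack r.
  by move=> erq; rewrite subr_gt0 ltNge; apply/negP => le_r; apply: (no_tight r).
pose eps := \big[Order.min/1]_(r | e r q) slack r.
have eps_gt0 : 0 < eps.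
  by apply: (big_ind (fun x => 0 < x)) => // x y; rewrite lt_min => ->.
have [_ [s /= /andP[ps /eqP ls] <-] short] := inf_adherent eps_gt0 (has_inf_walk_lengths p q).
case/lastP: s ps ls short => [|s r] /=; first by move=> _ pq; rewrite pq eqxx in qp.
rewrite rcons_path last_rcons => /andP[ps erq] rq; subst r.
rewrite walk_length_rcons => short.
have eps_le : eps <= slack (last p s) by rewrite /eps (bigD1 (last p s)) //= ge_min lexx.
have := dist_le_walk ps; rewrite /slack in eps_le; lra.
Qed.

End GeodesicDistance.

Section TightEdges.
Variables (R : realType) (T : finType) (e : rel T) (len : T -> T -> R).
Hypothesis e_sym : symmetric e.
Hypothesis len_sym : forall p q, len p q = len q p.
Hypothesis len_gt0 : forall p q, e p q -> 0 < len p q.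
Hypothesis card_edges : #|[set x : T * T | e x.1 x.2]| = (#|T| - 1).*2%N.
Variables (p : T) (D : T -> R).
Hypothesis D_ge0 : forall q, 0 <= D q.
Hypothesis D_root : D p = 0.
Hypothesis D_le_edge : forall r q, e r q -> D q <= D r + len r q.
Hypothesis D_tight_in : forall q, q != p -> exists r, e r q /\ D r + len r q <= D q.

Let edges := [set x : T * T | e x.1 x.2].
Let tight := [set x : T * T | e x.1 x.2 && (D x.2 == D x.1 + len x.1 x.2)].
Let flip (x : T * T) := (x.2, x.1).
Let tight_in q := #|[set r | (r, q) \in tight]|.

Let flip_inj : injective flip.
Proof. by case=> a b [c d] [-> ->]. Qed.

Lemma mem_flip_tight x :
  (x \in flip @: tight) = e x.1 x.2 && (D x.1 == D x.2 + len x.1 x.2).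
Proof.
case: x => a b; apply/imsetP/idP => [[[c d]] |] /=.
  by rewrite inE /= => /andP[ecd Hd] [-> ->]; rewrite e_sym ecd len_sym.
by case/andP=> eab Hd; exists (b, a); rewrite // inE /= e_sym eab len_sym.
Qed.

Lemma disjoint_tight_flip : [disjoint tight & flip @: tight].
Proof.
rewrite -setI_eq0; apply/eqP/setP => -[a b]; rewrite inE mem_flip_tight !inE /=.
apply/negP => /andP[/andP[eab /eqP Db] /andP[_ /eqP Da]].
have := len_gt0 eab; lra.
Qed.

Lemma tight_flip_sub_edges : tight :|: flip @: tight \subset edges.
Proof.
by apply/fintype.subsetP => x; rewrite !inE mem_flip_tight => /orP[] /andP[].
Qed.

Lemma card_tight_flip : #|tight :|: flip @: tight| = (#|tight| + #|tight|)%N.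
Proof.
have := disjoint_tight_flip; rewrite -setI_eq0 => /eqP tight_flip0.
by rewrite cardsU tight_flip0 cards0 subn0 card_imset.
Qed.

Lemma card_tight_le : (#|tight| <= #|T|.-1)%N.
Proof.
have := subset_leq_card tight_flip_sub_edges.
by rewrite card_tight_flip card_edges addnn leq_double subn1.
Qed.

Lemma tight_in_root : tight_in p = 0%N.
Proof.
apply/eqP; rewrite cards_eq0; apply/eqP/setP => r; rewrite !inE /=.
apply/negP => /andP[erp /eqP]; rewrite D_root.
have := len_gt0 erp; have := D_ge0 r; lra.
Qed.

Lemma tight_in_gt0 q : q != p -> (0 < tight_in q)%N.
Proof.
case/D_tight_in => r [erq le_rq]; rewrite card_gt0; apply/set0Pn; exists r.
by rewrite !inE /= erq eq_le le_rq D_le_edge.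
Qed.

Lemma sum_tight_in : (\sum_q tight_in q)%N = #|tight|.
Proof.
rewrite -sum1_card big_pairs_by_snd; apply: eq_bigr => q _.
by rewrite /tight_in -sum1_card; apply: eq_bigl => r; rewrite inE.
Qed.

(* There are at most v - 1 tight edges but each of the v - 1 vertices
   q <> p has a tight incoming edge. *)
Lemma tight_in_eq1 q : q != p -> tight_in q = 1%N.
Proof.
have := @leqif_sum T (predC1 p) (fun q => 1 == tight_in q) (fun=> 1%N) tight_in.
case=> [r rp|]; first exact/leqif_eq/tight_in_gt0.
have -> : (\sum_(r | r != p) tight_in r = #|tight|)%N.
  by rewrite -sum_tight_in [RHS](bigD1 p) //= tight_in_root.
rewrite sum1_card cardC1 => ge_card.
rewrite eqn_leq ge_card card_tight_le => /esym /forall_inP all1 qp.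
by rewrite -(eqP (all1 q qp)).
Qed.

Lemma card_tight : #|tight| = #|T|.-1.
Proof.
rewrite -sum_tight_in (bigD1 p) //= tight_in_root -(cardC1 p) -sum1_card.
by apply: eq_bigr => q /tight_in_eq1.
Qed.

Lemma edges_tight_flip : edges = tight :|: flip @: tight.
Proof.
apply/eqP; rewrite eq_sym eqEcard tight_flip_sub_edges card_tight_flip.
by rewrite /edges card_edges card_tight addnn subn1 leqnn.
Qed.

Lemma sum_edges_tight (f : T * T -> R) :
  \sum_(x | e x.1 x.2) f x = \sum_(x in tight) f x + \sum_(x in tight) f (flip x).
Proof.
transitivity (\sum_(x in [predU tight & flip @: tight]) f x).
  apply: eq_bigl => x; have -> : e x.1 x.2 = (x \in edges) by rewrite inE.
  by rewrite edges_tight_flip finset.in_setU.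
by rewrite bigU ?disjoint_tight_flip // big_imset //; move=> x y _ _ /flip_inj.
Qed.

Lemma sum_tight_snd : \sum_q D q = \sum_(x in tight) D x.2.
Proof.
rewrite big_pairs_by_snd; apply: eq_bigr => q _ /=.
rewrite (eq_bigr (fun=> 1%N%:R * D q)) => [|r _]; last by rewrite mul1r.
rewrite -mulr_suml -natr_sum sum1dep_card -/(tight_in q).
by have [->|/tight_in_eq1 ->] := eqVneq q p; rewrite ?D_root ?mulr0 ?mulr1n ?mul1r.
Qed.

Lemma total_length_tight : total_length e len = \sum_(x in tight) len x.1 x.2.
Proof.
rewrite /total_length sum_edges_tight.
under [X in _ + X]eq_bigr do rewrite len_sym.
rewrite -[X in _ + X]/(\sum_(x in tight) len x.1 x.2).
set L := \sum_(x in tight) _; lra.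
Qed.

Lemma sum_valence_potential :
  \sum_q (valence e q)%:R * D q = 2 * \sum_q D q - total_length e len.
Proof.
have tight_snd : \sum_(x in tight) D x.2 = \sum_(x in tight) (D x.1 + len x.1 x.2).
  by apply: eq_bigr => x; rewrite inE => /andP[_ /eqP].
rewrite sum_valence_mul sum_edges_tight total_length_tight sum_tight_snd tight_snd.
rewrite big_split /=; ring.
Qed.

End TightEdges.

Section Tree.
Variables (R : realType) (T : finType) (e : rel T) (len : T -> T -> R).
Hypothesis T_gt0 : (0 < #|T|)%N.
Hypothesis tree : is_tree e.
Hypothesis lengths : edge_lengths e len.

Let L := total_length e len.
Let n : R := #|T|%:R.

Lemma card_edges_tree : #|[set x : T * T | e x.1 x.2]| = (#|T| - 1).*2%N.
Proof. by case: tree => _ _ _; rewrite card_edge_pairs. Qed.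

Lemma sum_valence_tree : \sum_p ((valence e p)%:R : R) = 2 * (n - 1).
Proof. by rewrite sum_valence card_edges_tree -addnn natrD natrB //; ring. Qed.

Lemma sum_valence_dist p :
  \sum_q (valence e q)%:R * dist e len p q = 2 * \sum_q dist e len p q - L.
Proof.
have [e_sym _ e_connected _] := tree; have [len_sym len_gt0] := lengths.
apply: (sum_valence_potential e_sym len_sym len_gt0 card_edges_tree (D := dist e len p)).
- by move=> q; apply: dist_ge0.
- exact: distxx.
- by move=> r q; apply: dist_le_edge.
- by move=> q; apply: dist_last_edge.
Qed.

Lemma sum_valence_valence_dist :
  \sum_p \sum_q (valence e p)%:R * (valence e q)%:R * dist e len p q =
  4 * (\sum_p \sum_q dist e len p q) - (4 * n - 2) * L.
Proof.
have [e_sym _ e_connected _] := tree; have [len_sym len_gt0] := lengths.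
have row_sums : \sum_p (valence e p)%:R * \sum_q dist e len p q =
    2 * (\sum_p \sum_q dist e len p q) - n * L.
  transitivity (\sum_q \sum_p (valence e p)%:R * dist e len q p).
    under eq_bigr do rewrite mulr_sumr.
    rewrite exchange_big /=; apply: eq_bigr => q _.
    by apply: eq_bigr => p _; rewrite dist_sym.
  under eq_bigr do rewrite sum_valence_dist.
  by rewrite sumrB -mulr_sumr sumr_const (eq_card (B := T)) // /n [_%:R * L]mulr_natl.
transitivity (\sum_p (valence e p)%:R * (2 * \sum_q dist e len p q - L)).
  apply: eq_bigr => p _; rewrite -sum_valence_dist mulr_sumr.
  by apply: eq_bigr => q _; rewrite mulrA.
under eq_bigr do rewrite mulrBr mulrCA.
by rewrite sumrB -mulr_sumr -mulr_suml row_sums sum_valence_tree; ring.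
Qed.

Lemma total_length_unit : (forall p q, e p q -> len p q = 1) -> L = n - 1.
Proof.
move=> len1; rewrite /L /total_length (eq_bigr (fun=> 1%N%:R)) => [|x /len1 ->//].
rewrite -natr_sum sum1dep_card card_edges_tree -addnn natrD natrB //; lra.
Qed.

End Tree.

Theorem theorem4p3 (R : realType) (T : finType) (e : rel T)
    (len : T -> T -> R) :
  (0 < #|T|)%N -> is_tree e -> edge_lengths e len ->
  wiener e len =
    ((2 * #|T|%:R - 1) / 4) * total_length e len
    + (\sum_(p : T) \sum_(q : T)
         (valence e p)%:R * (valence e q)%:R * dist e len p q) / 8
  /\
  ((forall p q, e p q -> len p q = 1) ->
   wiener e len =
    (2 * #|T|%:R - 1) * (#|T|%:R - 1) / 4
    + (\sum_(p : T) \sum_(q : T)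
         (valence e p)%:R * (valence e q)%:R * dist e len p q) / 8).
Proof.
move=> T_gt0 tree lengths.
have wiener_formula : wiener e len = (2 * #|T|%:R - 1) / 4 * total_length e len
    + (\sum_p \sum_q (valence e p)%:R * (valence e q)%:R * dist e len p q) / 8.
  by rewrite sum_valence_valence_dist // /wiener; field.
split=> // len1.
by rewrite wiener_formula total_length_unit //; field.
Qed.
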